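(* The monomorphisms in $\mathsf{SquaMS}$ are exactly the morphisms which are one-to-one.
   Context: Let $M_0=\{(r,s)\in[0,1]^2: r\in\{0,1\}\text{ or } s\in\{0,1\}\}$. A square metric space is a pair $(X,S_X)$ with $X$ a metric space with all distances at most $2$ and $S_X\colon M_0\to X$ injective such that (sq1) for $i\in\{0,1\}$, $r,s\in[0,1]$: $d_X(S_X(i,r),S_X(i,s))=|s-r|$ and $d_X(S_X(r,i),S_X(s,i))=|s-r|$; (sq2) $d_X(S_X(r,s),S_X(t,u))\ge|r-t|+|s-u|$ for all $(r,s),(t,u)\in M_0$. $\mathsf{SquaMS}$ has these as objects and short maps $f\colon X\to Y$ with $f\circ S_X=S_Y$ as morphisms. *)

From Stdlib Require Import Reals.
Open Scope R_scope.

Definition inM0 (p : R * R) : Prop :=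
  (0 <= fst p <= 1) /\ (0 <= snd p <= 1) /\
  (fst p = 0 \/ fst p = 1 \/ snd p = 0 \/ snd p = 1).

Definition M0 : Type := { p : R * R | inM0 p }.

Definition M0x (p : M0) : R := fst (proj1_sig p).
Definition M0y (p : M0) : R := snd (proj1_sig p).

Record SquaMS : Type := mkSquaMS {
  carrier :> Type;
  dist : carrier -> carrier -> R;
  dist_nonneg : forall x y, 0 <= dist x y;
  dist_eq0 : forall x y, dist x y = 0 <-> x = y;
  dist_sym : forall x y, dist x y = dist y x;
  dist_triangle : forall x y z, dist x z <= dist x y + dist y z;
  dist_le2 : forall x y, dist x y <= 2;
  sqS : M0 -> carrier;
  sqS_inj : forall p q, sqS p = sqS q -> p = q;
  sq1_vert : forall (p q : M0), (M0x p = 0 \/ M0x p = 1) -> M0x q = M0x p ->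
      dist (sqS p) (sqS q) = Rabs (M0y q - M0y p);
  sq1_horiz : forall (p q : M0), (M0y p = 0 \/ M0y p = 1) -> M0y q = M0y p ->
      dist (sqS p) (sqS q) = Rabs (M0x q - M0x p);
  sq2 : forall (p q : M0),
      dist (sqS p) (sqS q) >= Rabs (M0x p - M0x q) + Rabs (M0y p - M0y q)
}.

Record SqHom (X Y : SquaMS) : Type := mkSqHom {
  hom_fun :> carrier X -> carrier Y;
  hom_short : forall x y, dist Y (hom_fun x) (hom_fun y) <= dist X x y;
  hom_S : forall p, hom_fun (sqS X p) = sqS Y p
}.

Definition sq_comp {X Y Z : SquaMS} (g : SqHom Y Z) (f : SqHom X Y) :
  carrier X -> carrier Z := fun x => g (f x).

(* Morphisms are equal iff their underlying maps agree (the other fields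
   are proofs). *)
Definition hom_eq {X Y : SquaMS} (f g : SqHom X Y) : Prop :=
  forall x, f x = g x.

Definition monomorphism {X Y : SquaMS} (f : SqHom X Y) : Prop :=
  forall (Z : SquaMS) (g h : SqHom Z X),
    (forall z, f (g z) = f (h z)) -> hom_eq g h.

Definition one_to_one {X Y : SquaMS} (f : SqHom X Y) : Prop :=
  forall x y, f x = f y -> x = y.

(* Glue one
   extra point * to the square, at distance max (d(x, S q), d(y, S q)) from
   each boundary point S q: the result is again a square metric space, and
   sending * to x or to y gives two distinct morphisms into X that f cannot
   tell apart when f x = f y. *)

From Stdlib Require Import Reals Lra Classical.
(* Imported after [Reals], so that [dist] is the field of [SquaMS] rather than
   the one of [Rlimit.Metric_Space]. *)
Open Scope R_scope.

Section OnePointExtension.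

Variable X : SquaMS.
(* [e] is a Katetov function on the boundary: the distance profile of a
   point that may consistently be added to it. *)
Variable e : M0 -> R.
Hypothesis e_pos : forall p, 0 < e p.
Hypothesis e_le2 : forall p, e p <= 2.
Hypothesis e_sqS_dist : forall p q, dist X (sqS X p) (sqS X q) <= e p + e q.
Hypothesis e_lipschitz : forall p q, e p <= dist X (sqS X p) (sqS X q) + e q.

(* [None] is the new point. *)
Definition ext_dist (a b : option M0) : R :=
  match a, b with
  | Some p, Some q => dist X (sqS X p) (sqS X q)
  | None, Some q | Some q, None => e q
  | None, None => 0
  end.

Lemma ext_dist_nonneg a b : 0 <= ext_dist a b.
Proof.
  destruct a, b; simpl; try apply dist_nonneg; try apply Rlt_le, e_pos; lra.
Qed.

Lemma ext_dist_eq0 a b : ext_dist a b = 0 <-> a = b.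
Proof.
  destruct a as [p|], b as [q|]; simpl; split; intro H; try discriminate;
    try (pose proof (e_pos p); lra); try (pose proof (e_pos q); lra); auto.
  - f_equal. now apply (sqS_inj X), (dist_eq0 X).
  - injection H as ->. now apply dist_eq0.
Qed.

Lemma ext_dist_sym a b : ext_dist a b = ext_dist b a.
Proof. destruct a, b; simpl; auto using dist_sym. Qed.

Lemma ext_dist_triangle a b c : ext_dist a c <= ext_dist a b + ext_dist b c.
Proof.
  pose proof (ext_dist_nonneg a b); pose proof (ext_dist_nonneg b c).
  destruct a as [p|], b as [q|], c as [r|]; simpl in *; try lra.
  - apply dist_triangle.
  - pose proof (e_lipschitz p q); lra.
  - apply e_sqS_dist.
  - pose proof (e_lipschitz r q); pose proof (dist_sym X (sqS X q) (sqS X r)); lra.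
Qed.

Lemma ext_dist_le2 a b : ext_dist a b <= 2.
Proof. destruct a, b; simpl; auto using dist_le2; lra. Qed.

Definition ext_space : SquaMS.
Proof.
  refine (mkSquaMS (option M0) ext_dist ext_dist_nonneg ext_dist_eq0
            ext_dist_sym ext_dist_triangle ext_dist_le2 (@Some M0) _ _ _ _).
  - intros p q H. now injection H.
  - apply (sq1_vert X).
  - apply (sq1_horiz X).
  - apply (sq2 X).
Defined.

Section ExtensionHom.

Variable z : X.
Hypothesis z_dist_le : forall q, dist X z (sqS X q) <= e q.

Definition ext_fun (a : option M0) : X :=
  match a with Some p => sqS X p | None => z end.

Lemma ext_fun_short a b :
  dist X (ext_fun a) (ext_fun b) <= dist ext_space a b.
Proof.
  destruct a as [p|], b as [q|]; simpl.
  - lra.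
  - rewrite dist_sym. apply z_dist_le.
  - apply z_dist_le.
  - right. now apply dist_eq0.
Qed.

Definition ext_hom : SqHom ext_space X :=
  mkSqHom ext_space X ext_fun ext_fun_short (fun p => eq_refl).

End ExtensionHom.

End OnePointExtension.

Section PairDistance.

Variable X : SquaMS.
Variables x y : X.

Hypothesis Hxy : x <> y.

Definition pair_dist (q : M0) : R :=
  Rmax (dist X x (sqS X q)) (dist X y (sqS X q)).

Lemma pair_dist_pos p : 0 < pair_dist p.
Proof.
  apply Rnot_le_lt; intro Hle. apply Hxy.
  pose proof (Rmax_l (dist X x (sqS X p)) (dist X y (sqS X p))).
  pose proof (Rmax_r (dist X x (sqS X p)) (dist X y (sqS X p))).
  pose proof (dist_nonneg X x (sqS X p)); pose proof (dist_nonneg X y (sqS X p)).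
  assert (Hx : dist X x (sqS X p) = 0) by (unfold pair_dist in Hle; lra).
  assert (Hy : dist X y (sqS X p) = 0) by (unfold pair_dist in Hle; lra).
  apply dist_eq0 in Hx, Hy. congruence.
Qed.

Lemma pair_dist_le2 p : pair_dist p <= 2.
Proof. apply Rmax_lub; apply dist_le2. Qed.

Lemma pair_dist_sqS_dist p q : dist X (sqS X p) (sqS X q) <= pair_dist p + pair_dist q.
Proof.
  pose proof (dist_triangle X (sqS X p) x (sqS X q)).
  pose proof (dist_sym X x (sqS X p)).
  pose proof (Rmax_l (dist X x (sqS X p)) (dist X y (sqS X p))).
  pose proof (Rmax_l (dist X x (sqS X q)) (dist X y (sqS X q))).
  unfold pair_dist; lra.
Qed.

Lemma pair_dist_lipschitz p q : pair_dist p <= dist X (sqS X p) (sqS X q) + pair_dist q.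
Proof.
  pose proof (dist_sym X (sqS X q) (sqS X p)).
  pose proof (Rmax_l (dist X x (sqS X q)) (dist X y (sqS X q))).
  pose proof (Rmax_r (dist X x (sqS X q)) (dist X y (sqS X q))).
  pose proof (dist_triangle X x (sqS X q) (sqS X p)).
  pose proof (dist_triangle X y (sqS X q) (sqS X p)).
  unfold pair_dist; apply Rmax_lub; lra.
Qed.

Definition pair_ext : SquaMS :=
  ext_space X pair_dist pair_dist_pos pair_dist_le2
    pair_dist_sqS_dist pair_dist_lipschitz.

Definition pair_ext_hom (z : X) (Hz : forall q, dist X z (sqS X q) <= pair_dist q) :
  SqHom pair_ext X :=
  ext_hom X pair_dist pair_dist_pos pair_dist_le2
    pair_dist_sqS_dist pair_dist_lipschitz z Hz.

End PairDistance.

Theorem mainTheorem19 (X Y : SquaMS) (f : SqHom X Y) :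
  monomorphism f <-> one_to_one f.
Proof.
  split.
  - intros Hmono x y Hfxy.
    apply NNPP; intro Hxy.
    pose (to_x := pair_ext_hom X x y Hxy x (fun q => Rmax_l _ _)).
    pose (to_y := pair_ext_hom X x y Hxy y (fun q => Rmax_r _ _)).
    assert (to_x_eq_to_y : hom_eq to_x to_y).
    { apply Hmono. intros [p|]; [reflexivity | exact Hfxy]. }
    exact (Hxy (to_x_eq_to_y None)).
  - intros Hinj Z g h Hfgh z. exact (Hinj _ _ (Hfgh z)).
Qed.
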